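(* Every vertex of a friendship digraph has outdegree at least $2$.
   Context: All digraphs are finite and have neither loops nor parallel arcs (a pair of opposite arcs $(u,v)$ and $(v,u)$ is allowed). A friendship digraph is a nontrivial digraph (at least two vertices) in which any two distinct vertices have exactly one common out-neighbor. *)

From mathcomp Require Import all_boot.
Set Implicit Arguments. Unset Strict Implicit. Unset Printing Implicit Defensive.

(* A digraph on a finite vertex type V is given by its arc relation [arc : rel V];
   "no parallel arcs" is automatic for a relation; "no loops" = irreflexive. *)
Definition loopless (V : finType) (arc : rel V) : Prop := forall v, ~~ arc v v.

Definition outnb (V : finType) (arc : rel V) (v : V) : {set V} := [set w | arc v w].

Definition outdeg (V : finType) (arc : rel V) (v : V) : nat := #|outnb arc v|.

Definition friendship_digraph (V : finType) (arc : rel V) : Prop :=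
  [/\ loopless arc, 1 < #|V| &
      forall u v : V, u != v -> #|outnb arc u :&: outnb arc v| = 1].

From mathcomp Require Import all_boot.

Set Implicit Arguments.
Unset Strict Implicit.
Unset Printing Implicit Defensive.

(* Any vertex v has an out-neighbour w, namely the common out-neighbour of v
   and some other vertex.  Then v and w have a common out-neighbour x, and
   x <> w since there are no loops; so w and x are two out-neighbours of v. *)

Lemma card_gt1_exists_neq (T : finType) (v : T) :
  1 < #|T| -> exists u, u != v.
Proof.
case/card_gt1P=> a [b [_ _ neq_ab]].
have [eq_av | neq_av] := eqVneq a v; last by exists a.
by exists b; rewrite -eq_av eq_sym.
Qed.

Section FriendshipDigraph.

Variables (V : finType) (arc : rel V).
Hypothesis friendship : friendship_digraph arc.

Lemma friendship_arc_neq (u w : V) : arc u w -> u != w.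
Proof.
case: friendship => loopfree _ _ uw.
by apply: contraTneq uw => ->; apply: loopfree.
Qed.

Lemma friendship_common_outnb (u v : V) :
  u != v -> exists2 w, arc u w & arc v w.
Proof.
case: friendship => _ _ unique_common /unique_common common.
have /card_gt0P[w] : 0 < #|outnb arc u :&: outnb arc v| by rewrite common.
by rewrite !inE => /andP[]; exists w.
Qed.

Lemma friendship_exists_outnb (v : V) : exists w, arc v w.
Proof.
have [_ card_gt1 _] := friendship.
have [u /friendship_common_outnb[w _ vw]] := card_gt1_exists_neq v card_gt1.
by exists w.
Qed.

End FriendshipDigraph.

Theorem lemma2p1 (V : finType) (arc : rel V) :
  friendship_digraph arc -> forall v : V, 2 <= outdeg arc v.
Proof.
move=> friendship v.
have [w vw] := friendship_exists_outnb friendship v.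
have [x vx wx] := friendship_common_outnb friendship (friendship_arc_neq friendship vw).
apply/card_gt1P; exists w, x.
by rewrite !inE vw vx (friendship_arc_neq friendship wx).
Qed.
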